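(* Let $P$ be a continuous $L$-ordered set. Then (1) $({\rm pt}_L\sigma_L(P),{\rm sub}_{\sigma_L(P)})$ is a continuous $L$-dcpo; (2) the Scott $L$-topology of $({\rm pt}_L\sigma_L(P),{\rm sub}_{\sigma_L(P)})$ coincides with the spectral $L$-topology $\mathcal O{\rm pt}_L\sigma_L(P)$, i.e., $\sigma_L({\rm pt}_L\sigma_L(P))=\mathcal O{\rm pt}_L\sigma_L(P)$.
   Context: $L$ is a frame with implication $\to$. $L$-subsets: maps to $L$; ${\rm sub}_X(A,B)=\bigwedge_xA(x)\to B(x)$. $L$-order $e$ on $P$: $e(x,x)=1$, $e(x,y)\wedge e(y,z)\le e(x,z)$, $e(x,y)\wedge e(y,x)=1\Rightarrow x=y$. ${\downarrow}y(x)=e(x,y)$; $\sqcup A=x$ iff $e(x,y)={\rm sub}_P(A,{\downarrow}y)$ for all $y$; directed: $\bigvee D=1$ and $D(x)\wedge D(y)\le\bigvee_zD(z)\wedge e(x,z)\wedge e(y,z)$; ideal: directed lower set; $L$-dcpo: every directed $L$-subset has a supremum; ${\Downarrow}x(y)=\bigwedge\{e(x,\sqcup I)\to I(y):I\text{ ideal with a supremum}\}$; continuous $L$-ordered set: each ${\Downarrow}x$ directed with supremum $x$; continuous $L$-dcpo: continuous $L$-ordered set that is an $L$-dcpo. Scott $L$-topology $\sigma_L(P)$: upper sets $A$ ($A(x)\wedge e(x,y)\le A(y)$) with $A(\sqcup D)=\bigvee_xA(x)\wedge D(x)$ for every directed $D$ having a supremum. ${\rm pt}_L\sigma_L(P)$: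 the set of maps $p:\sigma_L(P)\to L$ preserving binary meets and arbitrary joins with $p(\lambda_P)=\lambda$ for constants; $L$-ordered by ${\rm sub}_{\sigma_L(P)}(p,q)=\bigwedge_{A\in\sigma_L(P)}p(A)\to q(A)$; its spectral $L$-topology $\mathcal O{\rm pt}_L\sigma_L(P)=\{\phi(A):A\in\sigma_L(P)\}$ with $\phi(A)(p)=p(A)$. *)

Set Implicit Arguments.
Unset Strict Implicit.

Record frame := Frame {
  car :> Type;
  le : car -> car -> Prop;
  le_refl : forall a, le a a;
  le_trans : forall a b c, le a b -> le b c -> le a c;
  le_antisym : forall a b, le a b -> le b a -> a = b;
  sup : (car -> Prop) -> car;
  sup_ub : forall (S : car -> Prop) a, S a -> le a (sup S);
  sup_least : forall (S : car -> Prop) b, (forall a, S a -> le a b) -> le (sup S) b;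
  meet : car -> car -> car;
  meet_lb1 : forall a b, le (meet a b) a;
  meet_lb2 : forall a b, le (meet a b) b;
  meet_glb : forall a b c, le c a -> le c b -> le c (meet a b);
  frame_distr : forall a (S : car -> Prop),
    meet a (sup S) = sup (fun c => exists s, S s /\ c = meet a s);
  impl : car -> car -> car;
  impl_adj : forall a b c, le (meet a b) c <-> le a (impl b c)
}.

Section LTheory.
Variable L : frame.

Definition top : L := sup (fun _ : L => True).
Definition inf (S : L -> Prop) : L := sup (fun a => forall b, S b -> le a b).
Definition wsup (I : Type) (f : I -> L) : L := sup (fun a => exists i, a = f i).
Definition winf (I : Type) (f : I -> L) : L := inf (fun a => exists i, a = f i).

Definition subL (X : Type) (A B : X -> L) : L := winf (fun x => impl (A x) (B x)).

Section Ordered.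
Variables (P : Type) (e : P -> P -> L).

Definition is_Lorder : Prop :=
  (forall x, e x x = top) /\
  (forall x y z, le (meet (e x y) (e y z)) (e x z)) /\
  (forall x y, meet (e x y) (e y x) = top -> x = y).

Definition down (y : P) : P -> L := fun x => e x y.

Definition is_supL (A : P -> L) (x : P) : Prop :=
  forall y, e x y = subL A (down y).

Definition directed (D : P -> L) : Prop :=
  wsup D = top /\
  forall x y, le (meet (D x) (D y))
                 (wsup (fun z => meet (D z) (meet (e x z) (e y z)))).

Definition lower_set (A : P -> L) : Prop :=
  forall x y, le (meet (A x) (e y x)) (A y).

Definition upper_set (A : P -> L) : Prop :=
  forall x y, le (meet (A x) (e x y)) (A y).

Definition ideal (I : P -> L) : Prop := directed I /\ lower_set I.

Definition Ldcpo : Prop :=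
  forall D, directed D -> exists x, is_supL D x.

Definition wayb (x : P) : P -> L := fun y =>
  inf (fun a => exists (I : P -> L) (s : P),
         ideal I /\ is_supL I s /\ a = impl (e x s) (I y)).

Definition continuous_Lset : Prop :=
  forall x, directed (wayb x) /\ is_supL (wayb x) x.

Definition continuous_Ldcpo : Prop := continuous_Lset /\ Ldcpo.

Definition scott_open (A : P -> L) : Prop :=
  upper_set A /\
  forall D s, directed D -> is_supL D s ->
    A s = wsup (fun x => meet (A x) (D x)).

End Ordered.

Definition sopen (P : Type) (e : P -> P -> L) := { A : P -> L | scott_open e A }.

(* L-points of sigma_L(P): maps preserving binary meets, arbitrary joins and
   constants (meets / joins / constants of sigma_L(P) are pointwise). *)
Definition is_Lpoint (P : Type) (e : P -> P -> L) (p : sopen e -> L) : Prop :=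
  (forall A B C : sopen e,
     (forall x, proj1_sig C x = meet (proj1_sig A x) (proj1_sig B x)) ->
     p C = meet (p A) (p B)) /\
  (forall (S : sopen e -> Prop) (C : sopen e),
     (forall x, proj1_sig C x = wsup (fun A : {A : sopen e | S A} => proj1_sig (proj1_sig A) x)) ->
     p C = wsup (fun A : {A : sopen e | S A} => p (proj1_sig A))) /\
  (forall (l : L) (C : sopen e), (forall x, proj1_sig C x = l) -> p C = l).

Definition ptL (P : Type) (e : P -> P -> L) := { p : sopen e -> L | is_Lpoint p }.

Definition pt_order (P : Type) (e : P -> P -> L) (p q : ptL e) : L :=
  subL (fun A : sopen e => proj1_sig p A) (fun A => proj1_sig q A).

Definition spectral_open (P : Type) (e : P -> P -> L) (U : ptL e -> L) : Prop :=
  exists A : sopen e, forall p : ptL e, U p = proj1_sig p A.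

End LTheory.

(* In a continuous L-ordered set every Scott open L-subset B satisfies
   B = \/_x B(x) /\ ⇑x, where ⇑x(y) = ⇓y(x) is Scott open by interpolation, so
   an L-point p of sigma_L(P) is determined by the values p(⇑x).  Directed joins
   of L-points are computed pointwise, so pt_L sigma_L(P) is an L-dcpo; with
   eta(x) = (B |-> B(x)), the way-below L-subset of p is
   q |-> \/_x p(⇑x) /\ sub(q, eta x), an ideal with supremum p.  Finally a Scott
   open U of the points restricts along eta to a Scott open U o eta of P, and
   evaluating U along the way-below ideal of p gives U(p) = p(U o eta). *)
From Stdlib Require Import FunctionalExtensionality ProofIrrelevance.
Set Implicit Arguments.
Unset Strict Implicit.

Section FrameFacts.
Variable L : frame.
Implicit Types a b c d : L.

Lemma le_top a : le a (top L).
Proof. apply sup_ub. exact I. Qed.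

Lemma le_top_eq a : le (top L) a -> a = top L.
Proof. intro H. apply le_antisym; auto using le_top. Qed.

Lemma inf_lb (S : L -> Prop) b : S b -> le (inf S) b.
Proof. intro H. apply sup_least. intros a Ha. apply Ha, H. Qed.

Lemma inf_glb (S : L -> Prop) a : (forall b, S b -> le a b) -> le a (inf S).
Proof. intro H. apply sup_ub. exact H. Qed.

Lemma wsup_ub I (f : I -> L) i : le (f i) (wsup f).
Proof. apply sup_ub. eauto. Qed.

Lemma le_wsup I (f : I -> L) i a : le a (f i) -> le a (wsup f).
Proof. intro H. eapply le_trans; [exact H | apply wsup_ub]. Qed.

Lemma wsup_least I (f : I -> L) a : (forall i, le (f i) a) -> le (wsup f) a.
Proof. intro H. apply sup_least. intros b [i ->]. apply H. Qed.

Lemma winf_lb I (f : I -> L) i : le (winf f) (f i).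
Proof. apply inf_lb. eauto. Qed.

Lemma winf_glb I (f : I -> L) a : (forall i, le a (f i)) -> le a (winf f).
Proof. intro H. apply inf_glb. intros b [i ->]. apply H. Qed.

Lemma meet_mono a b c d : le a c -> le b d -> le (meet a b) (meet c d).
Proof.
  intros Hac Hbd. apply meet_glb.
  - eapply le_trans; [apply meet_lb1 | exact Hac].
  - eapply le_trans; [apply meet_lb2 | exact Hbd].
Qed.

Lemma meetC_le a b : le (meet a b) (meet b a).
Proof. apply meet_glb; [apply meet_lb2 | apply meet_lb1]. Qed.

Lemma meet_top a : meet a (top L) = a.
Proof. apply le_antisym; [apply meet_lb1 | apply meet_glb; [apply le_refl | apply le_top]]. Qed.

Lemma impl_mp a b : le (meet (impl a b) a) b.
Proof. apply impl_adj, le_refl. Qed.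

Lemma impl_intro a b c : le (meet c a) b -> le c (impl a b).
Proof. apply impl_adj. Qed.

Lemma subL_lb X (A B : X -> L) x : le (meet (subL A B) (A x)) (B x).
Proof.
  eapply le_trans; [| apply (impl_mp (A x) (B x))].
  apply meet_mono; [apply (winf_lb (fun x => impl (A x) (B x))) | apply le_refl].
Qed.

Lemma subL_glb X (A B : X -> L) c :
  (forall x, le (meet c (A x)) (B x)) -> le c (subL A B).
Proof. intro H. apply winf_glb. intro x. apply impl_intro, H. Qed.

Lemma meet_wsup_distr a I (f : I -> L) :
  le (meet a (wsup f)) (wsup (fun i => meet a (f i))).
Proof.
  unfold wsup at 1. rewrite frame_distr. apply sup_least.
  intros c [s [[i ->] ->]]. apply (wsup_ub (fun i => meet a (f i)) i).
Qed.

Lemma meet_wsupr_le a I (f : I -> L) c :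
  (forall i, le (meet a (f i)) c) -> le (meet a (wsup f)) c.
Proof. intro H. eapply le_trans; [apply meet_wsup_distr | apply wsup_least, H]. Qed.

Lemma meet_wsupl_le a I (f : I -> L) c :
  (forall i, le (meet (f i) a) c) -> le (meet (wsup f) a) c.
Proof.
  intro H. eapply le_trans; [apply meetC_le |]. apply meet_wsupr_le.
  intro i. eapply le_trans; [apply meetC_le | apply H].
Qed.

End FrameFacts.

Ltac meet_auto := solve [
  match goal with
  | |- le _ (top _) => apply le_top
  | |- le ?a ?a => apply le_refl
  | |- le ?a (meet ?b ?c) => apply meet_glb; meet_auto
  | |- le (meet ?a ?b) ?c =>
      first [ apply (le_trans (meet_lb1 a b)); meet_auto
            | apply (le_trans (meet_lb2 a b)); meet_auto ]
  end].

Ltac le_via X := apply (@le_trans _ _ X); [try meet_auto |].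

Section LowerImage.
Variable L : frame.
Variables (P Q : Type) (e : P -> P -> L) (eQ : Q -> Q -> L) (f : P -> Q).
Hypothesis eQ_refl : forall q, eQ q q = top L.
Hypothesis eQ_trans : forall q r t, le (meet (eQ q r) (eQ r t)) (eQ q t).
Hypothesis f_mono : forall x y, le (e x y) (eQ (f x) (f y)).

Definition lower_image (D : P -> L) : Q -> L :=
  fun q => wsup (fun x => meet (D x) (eQ q (f x))).

Lemma le_lower_image D x : le (D x) (lower_image D (f x)).
Proof. apply (le_wsup (i := x)). rewrite eQ_refl. meet_auto. Qed.

Lemma lower_image_lower D : lower_set eQ (lower_image D).
Proof.
  intros q r. apply meet_wsupl_le. intro x. apply (le_wsup (i := x)).
  apply meet_glb; [meet_auto |]. le_via (meet (eQ r q) (eQ q (f x))). apply eQ_trans.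
Qed.

Lemma lower_image_directed D : directed e D -> directed eQ (lower_image D).
Proof.
  intros [HD_top HD_pair]. split.
  - apply le_top_eq. rewrite <- HD_top. apply wsup_least. intro x.
    apply (le_wsup (i := f x)), le_lower_image.
  - intros a b. apply meet_wsupl_le. intro x1. apply meet_wsupr_le. intro x2.
    le_via (meet (meet (D x1) (D x2)) (meet (eQ a (f x1)) (eQ b (f x2)))).
    le_via (meet (wsup (fun z => meet (D z) (meet (e x1 z) (e x2 z))))
                 (meet (eQ a (f x1)) (eQ b (f x2)))).
    { apply meet_mono; [apply HD_pair | apply le_refl]. }
    apply meet_wsupl_le. intro z. apply (le_wsup (i := f z)).
    apply meet_glb; [| apply meet_glb].
    + le_via (D z). apply le_lower_image.
    + le_via (meet (eQ a (f x1)) (eQ (f x1) (f z))).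
      { apply meet_glb; [meet_auto |]. le_via (e x1 z). apply f_mono. }
      apply eQ_trans.
    + le_via (meet (eQ b (f x2)) (eQ (f x2) (f z))).
      { apply meet_glb; [meet_auto |]. le_via (e x2 z). apply f_mono. }
      apply eQ_trans.
Qed.

Lemma lower_image_ideal D : directed e D -> ideal eQ (lower_image D).
Proof. split; [apply lower_image_directed | apply lower_image_lower]; auto. Qed.

Lemma upper_wsup_lower_image U D : upper_set eQ U ->
  wsup (fun q => meet (U q) (lower_image D q)) = wsup (fun x => meet (U (f x)) (D x)).
Proof.
  intro HU. apply le_antisym.
  - apply wsup_least. intro q. apply meet_wsupr_le. intro x. apply (le_wsup (i := x)).
    apply meet_glb; [| meet_auto]. le_via (meet (U q) (eQ q (f x))). apply HU.
  - apply wsup_least. intro x. apply (le_wsup (i := f x)).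
    apply meet_mono; [apply le_refl | apply le_lower_image].
Qed.

End LowerImage.

Section PreLOrder.
Variable L : frame.
Variables (P : Type) (e : P -> P -> L).
Hypothesis e_refl : forall x, e x x = top L.
Hypothesis e_trans : forall x y z, le (meet (e x y) (e y z)) (e x z).

Lemma supL_ub D s x : is_supL e D s -> le (D x) (e x s).
Proof.
  intro Hs. le_via (meet (subL D (down e s)) (D x)).
  - apply meet_glb; [| apply le_refl]. rewrite <- (Hs s), e_refl. apply le_top.
  - apply (subL_lb D (down e s) x).
Qed.

Lemma supL_unique D s t :
  (forall x y, meet (e x y) (e y x) = top L -> x = y) ->
  is_supL e D s -> is_supL e D t -> s = t.
Proof.
  intros e_antisym Hs Ht. apply e_antisym.
  rewrite (Hs t), <- (Ht t), (Ht s), <- (Hs s), !e_refl. apply meet_top.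
Qed.

Lemma down_ideal y : ideal e (down e y).
Proof.
  split; [split |].
  - apply le_top_eq, (le_wsup (i := y)). unfold down. rewrite e_refl. apply le_refl.
  - intros a b. apply (le_wsup (i := y)). unfold down. rewrite e_refl. meet_auto.
  - intros a b. unfold down. le_via (meet (e b a) (e a y)). apply e_trans.
Qed.

Lemma down_supL y : is_supL e (down e y) y.
Proof.
  intro w. apply le_antisym.
  - apply subL_glb. intro x. unfold down. le_via (meet (e x y) (e y w)). apply e_trans.
  - le_via (meet (subL (down e y) (down e w)) (e y y)).
    + apply meet_glb; [apply le_refl | rewrite e_refl; apply le_top].
    + apply (subL_lb (down e y) (down e w) y).
Qed.

Lemma wayb_le_ideal I s y x : ideal e I -> is_supL e I s ->
  le (meet (wayb e y x) (e y s)) (I x).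
Proof.
  intros HI Hs. le_via (meet (impl (e y s) (I x)) (e y s)).
  - apply meet_mono; [| apply le_refl]. apply inf_lb. exists I, s. auto.
  - apply impl_mp.
Qed.

Lemma wayb_le_ideal_sup I s x : ideal e I -> is_supL e I s -> le (wayb e s x) (I x).
Proof.
  intros HI Hs. le_via (meet (wayb e s x) (e s s)).
  - apply meet_glb; [apply le_refl | rewrite e_refl; apply le_top].
  - apply wayb_le_ideal; auto.
Qed.

Lemma wayb_le y x : le (wayb e y x) (e x y).
Proof. apply (wayb_le_ideal_sup x (down_ideal y) (down_supL y)). Qed.

Lemma wayb_upper y z x : le (meet (wayb e y x) (e y z)) (wayb e z x).
Proof.
  apply inf_glb. intros b [I [s [HI [Hs ->]]]]. apply impl_intro.
  le_via (meet (wayb e y x) (e y s)).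
  - apply meet_glb; [meet_auto |]. le_via (meet (e y z) (e z s)). apply e_trans.
  - apply wayb_le_ideal; auto.
Qed.

Lemma wayb_lower y x x' : le (meet (wayb e y x) (e x' x)) (wayb e y x').
Proof.
  apply inf_glb. intros b [I [s [HI [Hs ->]]]]. apply impl_intro.
  le_via (meet (I x) (e x' x)).
  - apply meet_glb; [| meet_auto]. le_via (meet (wayb e y x) (e y s)).
    apply wayb_le_ideal; auto.
  - apply (proj2 HI).
Qed.

Lemma lower_closure_ideal D : directed e D -> ideal e (lower_image e (fun x => x) D).
Proof. apply lower_image_ideal; auto. intros x y. apply le_refl. Qed.

Lemma lower_closure_supL D s : is_supL e D s -> is_supL e (lower_image e (fun x => x) D) s.
Proof.
  intros Hs w. apply le_antisym.
  - apply subL_glb. intro y. apply meet_wsupr_le. intro z. unfold down.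
    le_via (meet (e y z) (meet (e z s) (e s w))).
    { apply meet_glb; [| apply meet_glb]; [meet_auto | | meet_auto].
      le_via (D z). apply supL_ub; auto. }
    le_via (meet (e y z) (e z w)).
    { apply meet_glb; [meet_auto |]. le_via (meet (e z s) (e s w)). apply e_trans. }
    apply e_trans.
  - rewrite (Hs w). apply subL_glb. intro z.
    le_via (meet (subL (lower_image e (fun x => x) D) (down e w))
                 (lower_image e (fun x => x) D z)).
    { apply meet_mono; [apply le_refl | apply (@le_lower_image L P P e (fun x => x) e_refl)]. }
    apply subL_lb.
Qed.

End PreLOrder.

Section ContinuousLSet.
Variable L : frame.
Variables (P : Type) (e : P -> P -> L).
Hypothesis He : is_Lorder e.
Hypothesis Hc : continuous_Lset e.
Let e_refl : forall x, e x x = top L := proj1 He.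
Let e_trans : forall x y z, le (meet (e x y) (e y z)) (e x z) := proj1 (proj2 He).
Let wayb_top y : wsup (wayb e y) = top L := proj1 (proj1 (Hc y)).
Let wayb_pair y : forall x1 x2, le (meet (wayb e y x1) (wayb e y x2))
    (wsup (fun z => meet (wayb e y z) (meet (e x1 z) (e x2 z)))) := proj2 (proj1 (Hc y)).

Definition wayb_interp s : P -> L :=
  fun x => wsup (fun y => meet (wayb e s y) (wayb e y x)).

Lemma wayb_interp_directed s : directed e (wayb_interp s).
Proof.
  split.
  - apply le_top_eq. rewrite <- (wayb_top s). apply wsup_least. intro y.
    le_via (meet (wayb e s y) (wsup (wayb e y))).
    { apply meet_glb; [apply le_refl | rewrite wayb_top; apply le_top]. }
    apply meet_wsupr_le. intro x. apply (le_wsup (i := x)), (le_wsup (i := y)), le_refl.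
  - intros a b. apply meet_wsupl_le. intro y1. apply meet_wsupr_le. intro y2.
    le_via (meet (meet (wayb e s y1) (wayb e s y2)) (meet (wayb e y1 a) (wayb e y2 b))).
    le_via (meet (wsup (fun y => meet (wayb e s y) (meet (e y1 y) (e y2 y))))
                 (meet (wayb e y1 a) (wayb e y2 b))).
    { apply meet_mono; [apply wayb_pair | apply le_refl]. }
    apply meet_wsupl_le. intro y.
    le_via (meet (wayb e s y) (meet (wayb e y a) (wayb e y b))).
    { apply meet_glb; [meet_auto | apply meet_glb].
      - le_via (meet (wayb e y1 a) (e y1 y)). apply wayb_upper; auto.
      - le_via (meet (wayb e y2 b) (e y2 y)). apply wayb_upper; auto. }
    le_via (meet (wayb e s y) (wsup (fun c => meet (wayb e y c) (meet (e a c) (e b c))))).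
    { apply meet_mono; [apply le_refl | apply wayb_pair]. }
    apply meet_wsupr_le. intro c. apply (le_wsup (i := c)).
    apply meet_glb; [apply (le_wsup (i := y)) |]; meet_auto.
Qed.

Lemma wayb_interp_lower s : lower_set e (wayb_interp s).
Proof.
  intros x x'. apply meet_wsupl_le. intro y. apply (le_wsup (i := y)).
  apply meet_glb; [meet_auto |]. le_via (meet (wayb e y x) (e x' x)). apply wayb_lower; auto.
Qed.

Lemma wayb_interp_supL s : is_supL e (wayb_interp s) s.
Proof.
  intro w. apply le_antisym.
  - apply subL_glb. intro x. apply meet_wsupr_le. intro y. unfold down.
    le_via (meet (e x y) (meet (e y s) (e s w))).
    { apply meet_glb; [| apply meet_glb; [| meet_auto]].
      - le_via (wayb e y x). apply wayb_le; auto.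
      - le_via (wayb e s y). apply wayb_le; auto. }
    le_via (meet (e x y) (e y w)).
    { apply meet_glb; [meet_auto |]. le_via (meet (e y s) (e s w)). apply e_trans. }
    apply e_trans.
  - rewrite (proj2 (Hc s) w). apply subL_glb. intro y. change (down e w y) with (e y w).
    rewrite (proj2 (Hc y) w). apply subL_glb. intro x.
    le_via (meet (subL (wayb_interp s) (down e w)) (wayb_interp s x)).
    { apply meet_glb; [meet_auto |]. apply (le_wsup (i := y)). meet_auto. }
    apply subL_lb.
Qed.

Lemma wayb_interpolation s x : le (wayb e s x) (wayb_interp s x).
Proof.
  apply wayb_le_ideal_sup; auto.
  - split; [apply wayb_interp_directed | apply wayb_interp_lower].
  - apply wayb_interp_supL.
Qed.

Lemma wayb_open x : scott_open e (fun y => wayb e y x).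
Proof.
  split.
  - intros y z. apply wayb_upper; auto.
  - intros D s HD Hs. apply le_antisym.
    + eapply le_trans; [apply wayb_interpolation |]. apply wsup_least. intro y.
      le_via (meet (lower_image e (fun z => z) D y) (wayb e y x)).
      { apply meet_mono; [| apply le_refl]. apply wayb_le_ideal_sup; auto.
        - apply lower_closure_ideal; auto.
        - apply lower_closure_supL; auto. }
      apply meet_wsupl_le. intro z. apply (le_wsup (i := z)).
      apply meet_glb; [| meet_auto]. le_via (meet (wayb e y x) (e y z)). apply wayb_upper; auto.
    + apply wsup_least. intro y. le_via (meet (wayb e y x) (e y s)).
      { apply meet_mono; [apply le_refl | apply supL_ub; auto]. }
      apply wayb_upper; auto.
Qed.

Lemma scott_open_approx B y : scott_open e B -> B y = wsup (fun x => meet (B x) (wayb e y x)).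
Proof. intro HB. apply (proj2 HB); apply Hc. Qed.

End ContinuousLSet.

Section ScottOpens.
Variable L : frame.
Variables (P : Type) (e : P -> P -> L).

Notation so := (sopen e).
Notation sv A := (proj1_sig A).

Lemma const_open (l : L) : scott_open e (fun _ => l).
Proof.
  split.
  - intros x y. apply meet_lb1.
  - intros D s [HD_top _] _. apply le_antisym.
    + le_via (meet l (wsup D)).
      { apply meet_glb; [apply le_refl | rewrite HD_top; apply le_top]. }
      apply meet_wsup_distr.
    + apply wsup_least. intro. apply meet_lb1.
Qed.
Definition sconst (l : L) : so := exist _ _ (const_open l).

Lemma meet_open (A B : so) : scott_open e (fun x => meet (sv A x) (sv B x)).
Proof.
  destruct A as [A [HA_up HA]], B as [B [HB_up HB]]; simpl. split.
  - intros x y. apply meet_glb.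
    + le_via (meet (A x) (e x y)). apply HA_up.
    + le_via (meet (B x) (e x y)). apply HB_up.
  - intros D s HD Hs. rewrite (HA D s HD Hs), (HB D s HD Hs). apply le_antisym.
    + apply meet_wsupl_le. intro x. apply meet_wsupr_le. intro y.
      le_via (meet (meet (A x) (B y)) (meet (D x) (D y))).
      le_via (meet (meet (A x) (B y)) (wsup (fun z => meet (D z) (meet (e x z) (e y z))))).
      { apply meet_mono; [apply le_refl | apply (proj2 HD)]. }
      apply meet_wsupr_le. intro z. apply (le_wsup (i := z)).
      apply meet_glb; [apply meet_glb | meet_auto].
      * le_via (meet (A x) (e x z)). apply HA_up.
      * le_via (meet (B y) (e y z)). apply HB_up.
    + apply wsup_least. intro x. apply meet_glb; apply (le_wsup (i := x)); meet_auto.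
Qed.
Definition smeet (A B : so) : so := exist _ _ (meet_open A B).

Lemma join_open I (F : I -> so) : scott_open e (fun x => wsup (fun i => sv (F i) x)).
Proof.
  split.
  - intros x y. apply meet_wsupl_le. intro i. apply (le_wsup (i := i)).
    apply (proj1 (proj2_sig (F i))).
  - intros D s HD Hs. apply le_antisym.
    + apply wsup_least. intro i. rewrite (proj2 (proj2_sig (F i)) D s HD Hs).
      apply wsup_least. intro x. apply (le_wsup (i := x)).
      apply meet_mono; [apply (wsup_ub (fun i => sv (F i) x) i) | apply le_refl].
    + apply wsup_least. intro x. apply meet_wsupl_le. intro i. apply (le_wsup (i := i)).
      rewrite (proj2 (proj2_sig (F i)) D s HD Hs). apply (le_wsup (i := x)), le_refl.
Qed.
Definition sjoin I (F : I -> so) : so := exist _ _ (join_open F).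

Section Point.
Variable p : so -> L.
Hypothesis Hp : is_Lpoint p.

Lemma pt_meet (A B C : so) :
  (forall x, sv C x = meet (sv A x) (sv B x)) -> p C = meet (p A) (p B).
Proof. apply (proj1 Hp). Qed.

Lemma pt_const (l : L) (C : so) : (forall x, sv C x = l) -> p C = l.
Proof. apply (proj2 (proj2 Hp)). Qed.

Lemma pt_mono (A B : so) : (forall x, le (sv A x) (sv B x)) -> le (p A) (p B).
Proof.
  intro HAB. rewrite (pt_meet (A := A) (B := B) (C := A)); [apply meet_lb2 |].
  intro x. apply le_antisym; [apply meet_glb; [apply le_refl | apply HAB] | apply meet_lb1].
Qed.

Lemma pt_const_meet (l : L) (B C : so) :
  (forall x, sv C x = meet l (sv B x)) -> p C = meet l (p B).
Proof. intro HC. rewrite (pt_meet (A := sconst l) HC). f_equal. apply pt_const. reflexivity. Qed.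

Lemma pt_join I (F : I -> so) (C : so) :
  (forall x, sv C x = wsup (fun i => sv (F i) x)) -> p C = wsup (fun i => p (F i)).
Proof.
  intro HC. pose (S A := exists i, A = F i).
  assert (HS : forall (g : so -> L), wsup (fun A : {A | S A} => g (proj1_sig A)) = wsup (fun i => g (F i))).
  { intro g. apply le_antisym.
    - apply wsup_least. intros [A [i ->]]. apply (wsup_ub (fun i => g (F i)) i).
    - apply wsup_least. intro i. apply (le_wsup (i := exist S (F i) (ex_intro _ i eq_refl))), le_refl. }
  rewrite <- HS. apply (proj1 (proj2 Hp)).
  intro x. rewrite HC. exact (eq_sym (HS (fun A => sv A x))).
Qed.

Lemma pt_weighted_join I (l : I -> L) (F : I -> so) (C : so) :
  (forall x, sv C x = wsup (fun i => meet (l i) (sv (F i) x))) ->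
  p C = wsup (fun i => meet (l i) (p (F i))).
Proof.
  intro HC. rewrite (pt_join (F := fun i => smeet (sconst (l i)) (F i)) HC).
  f_equal. apply functional_extensionality. intro i. apply pt_const_meet. reflexivity.
Qed.

End Point.

End ScottOpens.

Section PointOrder.
Variable L : frame.
Variables (P : Type) (e : P -> P -> L).

Notation so := (sopen e).
Notation sv A := (proj1_sig A).
Notation pv p := (proj1_sig p).
Notation pto := (@pt_order L P e).

Lemma pt_order_le (p q : ptL e) (A : so) : le (meet (pto p q) (pv p A)) (pv q A).
Proof. apply (subL_lb (fun A => pv p A) (fun A => pv q A) A). Qed.

Lemma pt_order_refl (p : ptL e) : pto p p = top L.
Proof. apply le_top_eq, subL_glb. intro A. apply meet_lb2. Qed.

Lemma pt_order_trans (p q r : ptL e) : le (meet (pto p q) (pto q r)) (pto p r).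
Proof.
  apply subL_glb. intro A. le_via (meet (pto q r) (meet (pto p q) (pv p A))).
  le_via (meet (pto q r) (pv q A)). { apply meet_mono; [apply le_refl | apply pt_order_le]. }
  apply pt_order_le.
Qed.

Lemma pt_eq (p q : ptL e) : (forall A, pv p A = pv q A) -> p = q.
Proof.
  destruct p as [p Hp], q as [q Hq]; simpl. intro Hpq.
  assert (p = q) by (apply functional_extensionality; exact Hpq). subst q.
  f_equal. apply proof_irrelevance.
Qed.

Lemma pt_order_top_le (p q : ptL e) A : pto p q = top L -> le (pv p A) (pv q A).
Proof.
  intro Htop. le_via (meet (pto p q) (pv p A)).
  - apply meet_glb; [rewrite Htop; apply le_top | apply le_refl].
  - apply pt_order_le.
Qed.

Lemma pt_Lorder : is_Lorder pto.
Proof.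
  split; [exact pt_order_refl | split; [exact pt_order_trans |]].
  intros p q Htop. apply pt_eq. intro A.
  apply le_antisym; apply pt_order_top_le, le_top_eq; rewrite <- Htop; meet_auto.
Qed.

Definition dsup_fun (D : ptL e -> L) : so -> L :=
  fun B => wsup (fun q => meet (pv q B) (D q)).

Lemma dsup_fun_point D : directed pto D -> is_Lpoint (dsup_fun D).
Proof.
  intros [HD_top HD_pair]. unfold dsup_fun. split; [| split].
  - intros A B C HC. apply le_antisym.
    + apply wsup_least. intro q. rewrite (pt_meet (proj2_sig q) HC).
      apply meet_glb; apply (le_wsup (i := q)); meet_auto.
    + apply meet_wsupl_le. intro q. apply meet_wsupr_le. intro r.
      le_via (meet (meet (pv q A) (pv r B)) (meet (D q) (D r))).
      le_via (meet (meet (pv q A) (pv r B))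
                   (wsup (fun z => meet (D z) (meet (pto q z) (pto r z))))).
      { apply meet_mono; [apply le_refl | apply HD_pair]. }
      apply meet_wsupr_le. intro z. apply (le_wsup (i := z)).
      rewrite (pt_meet (proj2_sig z) HC). apply meet_glb; [apply meet_glb | meet_auto].
      * le_via (meet (pto q z) (pv q A)). apply pt_order_le.
      * le_via (meet (pto r z) (pv r B)). apply pt_order_le.
  - intros S C HC. apply le_antisym.
    + apply wsup_least. intro q. rewrite ((proj1 (proj2 (proj2_sig q))) S C HC).
      apply meet_wsupl_le. intro A. apply (le_wsup (i := A)), (le_wsup (i := q)), le_refl.
    + apply wsup_least. intro A. apply wsup_least. intro q. apply (le_wsup (i := q)).
      apply meet_mono; [| apply le_refl].
      rewrite ((proj1 (proj2 (proj2_sig q))) S C HC).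
      apply (wsup_ub (fun A : {A : so | S A} => pv q (proj1_sig A)) A).
  - intros l C HC. apply le_antisym.
    + apply wsup_least. intro q. rewrite (pt_const (proj2_sig q) HC). apply meet_lb1.
    + le_via (meet l (wsup D)). { apply meet_glb; [apply le_refl | rewrite HD_top; apply le_top]. }
      apply meet_wsupr_le. intro q. apply (le_wsup (i := q)).
      rewrite (pt_const (proj2_sig q) HC). apply le_refl.
Qed.

Definition dsup D (HD : directed pto D) : ptL e := exist _ _ (dsup_fun_point HD).

Lemma dsup_supL D (HD : directed pto D) : is_supL pto D (dsup HD).
Proof.
  intro y. apply le_antisym.
  - apply subL_glb. intro q. change (down pto y q) with (pto q y).
    apply subL_glb. intro A.
    le_via (meet (pto (dsup HD) y) (pv (dsup HD) A)).
    { apply meet_glb; [meet_auto |]. apply (le_wsup (i := q)). meet_auto. }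
    apply pt_order_le.
  - apply subL_glb. intro A. apply meet_wsupr_le. intro q.
    le_via (meet (pto q y) (pv q A)).
    { apply meet_glb; [| meet_auto].
      le_via (meet (subL D (down pto y)) (D q)). apply (subL_lb D (down pto y) q). }
    apply pt_order_le.
Qed.

Lemma pt_supL_eval D s : directed pto D -> is_supL pto D s ->
  forall B, pv s B = dsup_fun D B.
Proof.
  intros HD Hs B.
  replace s with (dsup HD); [reflexivity |].
  apply (supL_unique pt_order_refl (proj2 (proj2 pt_Lorder)) (dsup_supL HD) Hs).
Qed.

Lemma pt_dcpo : Ldcpo pto.
Proof. intros D HD. exists (dsup HD). apply dsup_supL. Qed.

Lemma eval_upper (A : so) : upper_set pto (fun p => pv p A).
Proof. intros p q. eapply le_trans; [apply meetC_le | apply pt_order_le]. Qed.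

Lemma eval_open (A : so) : scott_open pto (fun p => pv p A).
Proof. split; [apply eval_upper | intros D s HD Hs; apply (pt_supL_eval HD Hs)]. Qed.

Lemma eta_point (x : P) : is_Lpoint (fun A : so => sv A x).
Proof. split; [| split]; intros; auto. Qed.

Definition eta (x : P) : ptL e := exist _ _ (eta_point x).

Lemma eta_mono x y : le (e x y) (pto (eta x) (eta y)).
Proof.
  apply subL_glb. intro B. simpl. eapply le_trans; [apply meetC_le | apply (proj1 (proj2_sig B))].
Qed.

End PointOrder.

Section PointsOfContinuous.
Variable L : frame.
Variables (P : Type) (e : P -> P -> L).
Hypothesis He : is_Lorder e.
Hypothesis Hc : continuous_Lset e.

Notation so := (sopen e).
Notation sv A := (proj1_sig A).
Notation pv p := (proj1_sig p).
Notation pto := (@pt_order L P e).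
Notation eta := (eta e).

Let eta_lower_image_directed D : directed e D -> directed pto (lower_image pto eta D) :=
  lower_image_directed (@pt_order_refl L P e) (@pt_order_trans L P e) (eta_mono e) (D := D).

Let eta_upper_wsup_lower_image U D :
  upper_set pto U ->
  wsup (fun q => meet (U q) (lower_image pto eta D q)) = wsup (fun x => meet (U (eta x)) (D x)) :=
  upper_wsup_lower_image eta (@pt_order_refl L P e) D.

Definition upx (x : P) : so := exist _ _ (wayb_open He Hc x).

Lemma pt_approx (p : ptL e) (B : so) :
  pv p B = wsup (fun x => meet (sv B x) (pv p (upx x))).
Proof.
  apply (pt_weighted_join (proj2_sig p)). intro y.
  apply scott_open_approx; [exact Hc | exact (proj2_sig B)].
Qed.

Lemma upx_le_pt_order (r : ptL e) x : le (pv r (upx x)) (pto (eta x) r).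
Proof.
  apply subL_glb. intro B. simpl.
  le_via (meet (sv B x) (pv r (upx x))).
  rewrite <- (pt_const_meet (proj2_sig r) (B := upx x) (C := smeet (sconst e (sv B x)) (upx x)))
    by reflexivity.
  apply (pt_mono (proj2_sig r)). intro y. simpl.
  le_via (meet (sv B x) (e x y)).
  { apply meet_mono; [apply le_refl | apply wayb_le; apply He]. }
  apply (proj1 (proj2_sig B)).
Qed.

Lemma pt_upx_directed (p : ptL e) : directed e (fun x => pv p (upx x)).
Proof.
  split.
  - transitivity (pv p (sconst e (top L))).
    + symmetry. apply (pt_join (proj2_sig p)). intro y. symmetry. apply (proj1 (proj1 (Hc y))).
    + apply (pt_const (proj2_sig p)). reflexivity.
  - intros x1 x2.
    set (G := sjoin (fun z => smeet (sconst e (meet (e x1 z) (e x2 z))) (upx z))).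
    le_via (pv p G).
    { rewrite <- (pt_meet (proj2_sig p) (C := smeet (upx x1) (upx x2))) by reflexivity.
      apply (pt_mono (proj2_sig p)). intro y. simpl.
      eapply le_trans; [apply (proj2 (proj1 (Hc y))) |].
      apply wsup_least. intro z. apply (le_wsup (i := z)), meetC_le. }
    rewrite (pt_weighted_join (proj2_sig p) (l := fun z => meet (e x1 z) (e x2 z)) (F := upx))
      by reflexivity.
    apply wsup_least. intro z. apply (le_wsup (i := z)), meetC_le.
Qed.

Definition pt_wayb (p : ptL e) : ptL e -> L :=
  lower_image pto eta (fun x => pv p (upx x)).

Lemma lower_image_eta_supL D (HD : directed e D) (r : ptL e) :
  (forall B, pv r B = wsup (fun x => meet (sv B x) (D x))) ->
  is_supL pto (lower_image pto eta D) r.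
Proof.
  intro Hr.
  replace r with (dsup (eta_lower_image_directed HD)); [apply dsup_supL |].
  apply pt_eq. intro B. simpl. unfold dsup_fun. rewrite Hr.
  apply (eta_upper_wsup_lower_image D (eval_upper B)).
Qed.

Lemma pt_wayb_directed p : directed pto (pt_wayb p).
Proof. apply eta_lower_image_directed, pt_upx_directed. Qed.

Lemma pt_wayb_ideal p : ideal pto (pt_wayb p).
Proof. split; [apply pt_wayb_directed | apply (lower_image_lower eta (@pt_order_trans L P e))]. Qed.

Lemma pt_wayb_supL p : is_supL pto (pt_wayb p) p.
Proof. apply lower_image_eta_supL; [apply pt_upx_directed | apply pt_approx]. Qed.

Lemma wayb_pt p : wayb pto p = pt_wayb p.
Proof.
  apply functional_extensionality. intro q. apply le_antisym.
  - apply wayb_le_ideal_sup; [apply pt_order_refl | apply pt_wayb_ideal | apply pt_wayb_supL].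
  - apply wsup_least. intro x. apply inf_glb. intros b [J [s [HJ [Hs ->]]]].
    apply impl_intro.
    le_via (meet (pto q (eta x)) (pv s (upx x))).
    { apply meet_glb; [meet_auto |]. le_via (meet (pto p s) (pv p (upx x))). apply pt_order_le. }
    rewrite (pt_supL_eval (proj1 HJ) Hs). apply meet_wsupr_le. intro r.
    le_via (meet (J (eta x)) (pto q (eta x))).
    { apply meet_glb; [| meet_auto]. le_via (meet (J r) (pto (eta x) r)).
      { apply meet_glb; [meet_auto |]. le_via (pv r (upx x)). apply upx_le_pt_order. }
      apply (proj2 HJ). }
    apply (proj2 HJ).
Qed.

Lemma pt_continuous : continuous_Lset pto.
Proof. intro p. rewrite wayb_pt. split; [apply pt_wayb_directed | apply pt_wayb_supL]. Qed.

Lemma scott_open_eta U : scott_open pto U -> scott_open e (fun x => U (eta x)).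
Proof.
  intros [HU_up HU]. split.
  - intros x y. le_via (meet (U (eta x)) (pto (eta x) (eta y))).
    { apply meet_mono; [apply le_refl | apply eta_mono]. }
    apply HU_up.
  - intros D s HD Hs.
    assert (Hsup : is_supL pto (lower_image pto eta D) (eta s)).
    { apply lower_image_eta_supL; [exact HD |]. intro B. exact (proj2 (proj2_sig B) D s HD Hs). }
    rewrite (HU _ _ (eta_lower_image_directed HD) Hsup).
    apply (eta_upper_wsup_lower_image D HU_up).
Qed.

Lemma scott_open_spectral U : scott_open pto U -> spectral_open U.
Proof.
  intro HU. exists (exist _ _ (scott_open_eta HU)). intro p. simpl.
  rewrite (proj2 HU _ _ (pt_wayb_directed p) (pt_wayb_supL p)), pt_approx.
  apply (eta_upper_wsup_lower_image _ (proj1 HU)).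
Qed.

End PointsOfContinuous.

Theorem proposition6p3 (L : frame) (P : Type) (e : P -> P -> L) :
  is_Lorder e -> continuous_Lset e ->
  (is_Lorder (@pt_order L P e) /\ continuous_Ldcpo (@pt_order L P e)) /\
  (forall U : ptL e -> L,
     scott_open (@pt_order L P e) U <-> spectral_open U).
Proof.
  intros He Hc. split.
  - split; [apply pt_Lorder | split; [apply pt_continuous | apply pt_dcpo]; auto].
  - intro U. split; [apply scott_open_spectral; auto |].
    intros [A HA]. replace U with (fun p : ptL e => proj1_sig p A).
    + apply eval_open.
    + apply functional_extensionality. intro p. symmetry. apply HA.
Qed.
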